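(* Agrachev–Gamkrelidze monomial bases of the free pre-Lie algebra with one generator $(\mathcal{T},\to)$ are tree-grounded. Precisely: define sets of monomials $\mathcal{M}_n$ recursively by $\mathcal{M}_1=\{\bullet\}$ and, given $\mathcal{M}_1,\dots,\mathcal{M}_{n-1}$ with a total order on $\mathcal{M}_1\sqcup\dots\sqcup\mathcal{M}_{n-1}$ which restricts to an arbitrary total order on each $\mathcal{M}_j$ and satisfies $x>x'$ whenever $x\in\mathcal{M}_j$, $x'\in\mathcal{M}_{j'}$, $j>j'$, $$\mathcal{M}_n=\Big\{x_1\to\big(x_2\to(\cdots\to(x_r\to\bullet)\cdots)\big)\ \Big|\ r\ge 1,\ x_k\in\mathcal{M}_{j_k},\ \textstyle\sum_{k=1}^r j_k=n-1,\ x_1\ge x_2\ge\cdots\ge x_r\Big\}.$$ Then for every $n\ge 1$, replacing the grafting $\to$ by the Butcher product $\circ\!\!\rightarrow$ in each monomial of $\mathcal{M}_n$ yields every non-planar rooted tree with $n$ vertices exactly once.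
   Context: $\mathcal{T}$ is the vector space spanned by non-planar rooted trees; $\bullet$ is the one-vertex tree. The grafting $s\to t=\sum_{v\in V(t)}s\to_v t$ (graft the root of $s$ by a new edge onto vertex $v$ of $t$) makes $\mathcal{T}$ the free pre-Lie algebra on $\bullet$, graded by number of vertices. $B_+(t_1\cdots t_k)$ denotes the tree obtained by attaching the roots of $t_1,\dots,t_k$ to a new root; the Butcher product is $s\circ\!\!\rightarrow B_+(t_1\cdots t_k)=B_+(s\,t_1\cdots t_k)$. A monomial is a parenthesized word in $\bullet$ and one binary operation; its lower-energy term is its evaluation with the Butcher product. A monomial basis (set of monomials whose grafting-evaluations form a basis) of the degree-$n$ component is tree-grounded if its lower-energy terms are exactly the rooted trees with $n$ vertices, each once. *)

From Stdlib Require Import List Permutation.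
From mathcomp Require Import all_boot.
Set Implicit Arguments. Unset Strict Implicit. Unset Printing Implicit Defensive.

Inductive mon : Type :=
| Dot : mon
| Op : mon -> mon -> mon.    (* Op x y  stands for  x -> y *)

Fixpoint deg (m : mon) : nat :=
  match m with Dot => 1 | Op a b => deg a + deg b end.

Fixpoint comb (xs : seq mon) : mon :=
  match xs with [::] => Dot | x :: xs' => Op x (comb xs') end.

(* ---------- Planar rooted trees; non-planar trees = planar trees up to iso ---------- *)
Inductive rtree : Type := Node : seq rtree -> rtree.

Fixpoint vsize (t : rtree) : nat :=
  match t with Node ts => (sumn (map vsize ts)).+1 end.

Inductive iso : rtree -> rtree -> Prop :=
| iso_node (ts us us' : seq rtree) :
    Permutation us us' -> Forall2 iso ts us' -> iso (Node ts) (Node us).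

Definition butcher (s t : rtree) : rtree :=
  match t with Node ts => Node (s :: ts) end.

Fixpoint lower (m : mon) : rtree :=
  match m with Dot => Node [::] | Op a b => butcher (lower a) (lower b) end.

(* ---------- Agrachev--Gamkrelidze sets M_n ----------
   ord y x  means  "y <= x" for the chosen order on monomials of the same degree. *)
Definition ag_ge (ord : rel mon) : rel mon :=
  fun x y => (deg y < deg x) || ((deg x == deg y) && ord y x).

Inductive inM (ord : rel mon) : nat -> mon -> Prop :=
| inM1 : inM ord 1 Dot
| inMS (xs : seq mon) :
    (0 < size xs)%N ->
    (forall x, List.In x xs -> inM ord (deg x) x) ->
    sorted (ag_ge ord) xs ->
    inM ord (sumn (map deg xs)).+1 (comb xs).

Definition total_order_on (ord : rel mon) (P : mon -> Prop) : Prop :=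
  (forall x, P x -> ord x x) /\
  (forall x y, P x -> P y -> ord x y -> ord y x -> x = y) /\
  (forall x y z, P x -> P y -> P z -> ord x y -> ord y z -> ord x z) /\
  (forall x y, P x -> P y -> ord x y || ord y x).

From Stdlib Require Import List Permutation.
From HB Require Import structures.
From mathcomp Require Import all_boot.

Set Implicit Arguments.
Unset Strict Implicit.
Unset Printing Implicit Defensive.

(* A monomial of M_n is a comb x_1 -> (... -> (x_r -> Dot)) whose lower-energy
   term is the tree B_+(lower x_1 ... lower x_r), and every tree is B_+ of the
   multiset of its subtrees.  So, by induction on the size, the lower-energy map
   is a bijection from M_n onto trees up to isomorphism as soon as a multiset of
   monomials determines a unique non-increasing list x_1 >= ... >= x_r: the
   order on M_1 u ... u M_(n-1) is total, so sorting gives existence, and two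
   sorted lists that are permutations of each other coincide. *)

Fixpoint mon_eqb (m1 m2 : mon) : bool :=
  match m1, m2 with
  | Dot, Dot => true
  | Op a1 b1, Op a2 b2 => mon_eqb a1 a2 && mon_eqb b1 b2
  | _, _ => false
  end.

Lemma mon_eqP : Equality.axiom mon_eqb.
Proof.
elim=> [|a1 IHa b1 IHb] [|a2 b2] /=; try by constructor.
apply: (iffP andP) => [[/IHa-> /IHb->] // | [<- <-]].
by split; [apply/IHa | apply/IHb].
Qed.

HB.instance Definition _ := hasDecEq.Build mon mon_eqP.

Lemma InP (T : eqType) (x : T) (s : seq T) : reflect (List.In x s) (x \in s).
Proof.
elim: s => [|y s IHs] /=; first by constructor.
rewrite in_cons; apply: (iffP orP) => [[/eqP-> | /IHs] | [-> | /IHs]]; auto.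
Qed.

Lemma PermutationP (T : eqType) (s t : seq T) : reflect (Permutation s t) (perm_eq s t).
Proof.
apply: (iffP idP) => [|st]; last first.
  elim: st => [|x s' t' _ | x y s' | s1 s2 s3 _ p12 _ p23] //.
  - by rewrite perm_cons.
  - exact: (permEl (perm_catCA [:: _] [:: _] _)).
  - exact: perm_trans p12 p23.
elim: s t => [|x s IHs] t st; first by move: st; rewrite perm_sym => /perm_nilP->.
have x_t : x \in t by rewrite -(perm_mem st) mem_head.
move: st; case/splitPr: x_t => t1 t2.
rewrite perm_sym -(cat1s x t2) perm_catCA perm_cons perm_sym => /IHs st.
exact: Permutation_cons_app.
Qed.

Lemma Forall2_map (A A' B B' : Type) (f : A -> A') (g : B -> B')
    (R : A' -> B' -> Prop) xs ys :
  Forall2 R (List.map f xs) (List.map g ys) <-> Forall2 (fun x y => R (f x) (g y)) xs ys.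
Proof.
split; last by elim=> //= x y xs' ys' *; constructor.
elim: xs ys => [|x xs IHxs] [|y ys] /= xy; inversion xy => //.
by constructor; last exact: IHxs.
Qed.

Lemma Forall2_map_eq (A B C : Type) (f : A -> C) (g : B -> C) xs ys :
  Forall2 (fun x y => f x = g y) xs ys -> map f xs = map g ys.
Proof. by elim=> //= x y xs' ys' -> _ ->. Qed.

Lemma Forall2_in_l (A B : Type) (R : A -> B -> Prop) xs ys x :
  Forall2 R xs ys -> List.In x xs -> exists2 y, List.In y ys & R x y.
Proof.
elim=> //= x' y xs' ys' Rxy _ IH [<- | /IH[z]]; first by exists y; first left.
by exists z; first right.
Qed.

Lemma Forall2_choice (A B : Type) (R : A -> B -> Prop) ys :
  (forall y, List.In y ys -> exists x, R x y) -> exists xs, Forall2 R xs ys.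
Proof.
elim: ys => [|y ys IHys] Ry; first by exists [::].
have [x Rxy] := Ry y (or_introl erefl).
have [xs Rxsys] := IHys (fun z z_in => Ry z (or_intror z_in)).
by exists (x :: xs); constructor.
Qed.

Lemma Forall2_eq_in (A : Type) (R : A -> A -> Prop) xs ys :
  (forall x y, List.In x xs -> List.In y ys -> R x y -> x = y) ->
  Forall2 R xs ys -> xs = ys.
Proof.
move=> eqR xsys; elim: xsys eqR => //= x y xs' ys' Rxy _ IH eqR.
rewrite (eqR x y (or_introl erefl) (or_introl erefl) Rxy) IH // => x' y' x_in y_in.
exact: eqR (or_intror x_in) (or_intror y_in).
Qed.

Fixpoint rtree_nested_ind (P : rtree -> Prop)
    (IH : forall ts, (forall t, List.In t ts -> P t) -> P (Node ts)) (t : rtree) : P t :=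
  let: Node ts := t in
  IH ts (proj1 (Forall_forall P ts)
    ((fix all_P ts : Forall P ts :=
        match ts with
        | [::] => Forall_nil P
        | t :: ts' => Forall_cons t (rtree_nested_ind IH t) (all_P ts')
        end) ts)).

Lemma lower_comb xs : lower (comb xs) = Node (List.map lower xs).
Proof. by elim: xs => //= x xs ->. Qed.

Lemma vsize_lower m : vsize (lower m) = deg m.
Proof.
elim: m => //= a IHa b; case: (lower b) => ts /= <-.
by rewrite IHa addnS.
Qed.

Lemma inM_deg ord n m : inM ord n m -> deg m = n.
Proof. by case=> //= xs _ _ _; elim: xs => //= x xs ->; rewrite addnS. Qed.

Definition ag_mon (ord : rel mon) (x : mon) : Prop := inM ord (deg x) x.

Lemma inM_comb ord n m : inM ord n m ->
  exists xs, [/\ m = comb xs, {in xs, forall x, ag_mon ord x} & sorted (ag_ge ord) xs].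
Proof.
case=> [|xs _ xs_ag xs_sorted]; first by exists [::].
by exists xs; split=> // x /InP/xs_ag.
Qed.

Lemma iso_lower_comb xs ys : iso (lower (comb xs)) (lower (comb ys)) ->
  exists2 zs, Permutation ys zs & Forall2 (fun x z => iso (lower x) (lower z)) xs zs.
Proof.
rewrite !lower_comb => iso_xy; inversion iso_xy as [ts us us' ys_us' xs_us'].
have [zs [us'E ys_zs]] := Permutation_map_inv _ _ (Permutation_sym ys_us').
by exists zs; last by apply/Forall2_map; rewrite -us'E.
Qed.

Lemma iso_Node_perm ts ts' us :
  Permutation ts ts' -> Forall2 iso ts us -> iso (Node ts') (Node us).
Proof.
move=> /Permutation_Forall2 perm_ts /perm_ts[us' [us_us' ts'_us']].
exact: iso_node us_us' ts'_us'.
Qed.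

Section AgBasis.

Variable ord : rel mon.
Hypothesis ord_total : forall j, total_order_on ord (inM ord j).

Lemma ag_level x y : ag_mon ord x -> ag_mon ord y -> deg x = deg y ->
  inM ord (deg x) x /\ inM ord (deg x) y.
Proof. by move=> x_ag y_ag eq_xy; split; last rewrite eq_xy. Qed.

Section InList.

Variable s : seq mon.
Hypothesis s_ag : {in s, forall x, ag_mon ord x}.

Lemma ag_ge_total_in : {in s &, total (ag_ge ord)}.
Proof.
move=> x y /s_ag x_ag /s_ag y_ag; rewrite /ag_ge.
case: ltngtP => //= /esym eq_xy.
have [x_lvl y_lvl] := ag_level x_ag y_ag eq_xy.
have [_ [_ [_ ord_tot]]] := ord_total (deg x).
by rewrite orbC; apply: ord_tot.
Qed.

Lemma ag_ge_trans_in : {in s & &, transitive (ag_ge ord)}.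
Proof.
move=> y x z /s_ag y_ag /s_ag x_ag /s_ag z_ag; rewrite /ag_ge.
case/orP=> [lt_yx | /andP[/eqP eq_xy ord_yx]].
  case/orP=> [lt_zy | /andP[/eqP <- _]]; last by rewrite lt_yx.
  by rewrite (ltn_trans lt_zy lt_yx).
case/orP=> [lt_zy | /andP[/eqP eq_yz ord_zy]]; first by rewrite eq_xy lt_zy.
have [x_lvl y_lvl] := ag_level x_ag y_ag eq_xy.
have [_ z_lvl] := ag_level x_ag z_ag (etrans eq_xy eq_yz).
have [_ [_ [ord_trans _]]] := ord_total (deg x).
by rewrite -eq_yz -eq_xy ltnn eqxx (ord_trans z y x).
Qed.

Lemma ag_ge_anti_in : {in s &, antisymmetric (ag_ge ord)}.
Proof.
move=> x y /s_ag x_ag /s_ag y_ag; rewrite /ag_ge.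
case: ltngtP => //= /esym eq_xy /andP[ord_yx ord_xy].
have [x_lvl y_lvl] := ag_level x_ag y_ag eq_xy.
have [_ [ord_anti _]] := ord_total (deg x).
exact: ord_anti.
Qed.

End InList.

Lemma sorted_comb_eq_of_iso xs ys :
  {in ys, forall y, ag_mon ord y} -> sorted (ag_ge ord) xs -> sorted (ag_ge ord) ys ->
  (forall x z, List.In x xs -> ag_mon ord z -> iso (lower x) (lower z) -> x = z) ->
  iso (lower (comb xs)) (lower (comb ys)) -> xs = ys.
Proof.
move=> ys_ag xs_sorted ys_sorted IH /iso_lower_comb[zs /PermutationP ys_zs xs_zs].
have zs_ag : {in zs, forall z, ag_mon ord z}.
  by move=> z; rewrite -(perm_mem ys_zs); apply: ys_ag.
have xs_zs_eq : xs = zs.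
  by apply: Forall2_eq_in xs_zs => x z x_in /InP/zs_ag; apply: IH.
subst zs; apply: (sorted_eq_in (ag_ge_trans_in zs_ag) (ag_ge_anti_in zs_ag)) => //.
by rewrite perm_sym.
Qed.

Lemma inM_lower_inj n1 n2 m1 m2 : inM ord n1 m1 -> inM ord n2 m2 ->
  iso (lower m1) (lower m2) -> m1 = m2.
Proof.
move=> m1_M; elim: m1_M n2 m2 => [|xs _ _ IHxs xs_sorted] n2 m2
  /inM_comb[ys [-> ys_ag ys_sorted]] iso12.
  by rewrite -(@sorted_comb_eq_of_iso [::] ys) // => x z [].
by rewrite -(@sorted_comb_eq_of_iso xs ys) // => x z /IHxs; apply.
Qed.

Lemma inM_comb_sort ms : ms != [::] -> {in ms, forall m, ag_mon ord m} ->
  inM ord (sumn (map deg ms)).+1 (comb (sort (ag_ge ord) ms)).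
Proof.
move=> ms_nonempty ms_ag; rewrite -(perm_sumn (perm_map deg (permEl (perm_sort (ag_ge ord) ms)))).
apply: inMS.
- by rewrite size_sort lt0n size_eq0.
- by move=> x /InP; rewrite mem_sort => /ms_ag.
- exact: (sort_sorted_in (P := [in ms]) (ag_ge_total_in ms_ag) (allss ms)).
Qed.

Lemma lower_surj t : exists m, inM ord (vsize t) m /\ iso (lower m) t.
Proof.
elim/rtree_nested_ind: t => -[|t ts] IHts.
  by exists Dot; split; [exact: inM1 | exact: iso_node (perm_nil _) (Forall2_nil _)].
have [ms ms_ts] := Forall2_choice IHts.
have ms_nonempty : ms != [::] by apply/eqP => ms0; rewrite ms0 in ms_ts; inversion ms_ts.
have ms_ag : {in ms, forall m, ag_mon ord m}.
  move=> m /InP/(Forall2_in_l ms_ts)[u _ [m_M _]].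
  by rewrite /ag_mon (inM_deg m_M).
have deg_ms : map deg ms = map vsize (t :: ts).
  by apply: Forall2_map_eq; apply: Forall2_impl ms_ts => m u [/inM_deg].
have iso_ms : Forall2 iso (List.map lower ms) (t :: ts).
  rewrite -(List.map_id (t :: ts)); apply/Forall2_map.
  by apply: Forall2_impl ms_ts => m u [].
exists (comb (sort (ag_ge ord) ms)); split.
  by have := inM_comb_sort ms_nonempty ms_ag; rewrite deg_ms.
rewrite lower_comb; apply: iso_Node_perm iso_ms.
by apply/Permutation_map/PermutationP; rewrite perm_sym perm_sort.
Qed.

End AgBasis.

Theorem lemma3p5 (ord : rel mon) :
  (forall j, total_order_on ord (inM ord j)) ->
  forall n : nat, (1 <= n)%N ->
    (forall m, inM ord n m -> vsize (lower m) = n) /\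
    (forall t : rtree, vsize t = n -> exists m, inM ord n m /\ iso (lower m) t) /\
    (forall m1 m2, inM ord n m1 -> inM ord n m2 -> iso (lower m1) (lower m2) -> m1 = m2).
Proof.
move=> ord_total n _; split; [|split].
- by move=> m /inM_deg deg_m; rewrite vsize_lower.
- by move=> t <-; apply: lower_surj.
- by move=> m1 m2; apply: inM_lower_inj.
Qed.
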